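(* For every finite set $S$, every $f\in C_S$ and every differential operator $D$ on $Y^S$ with complex polynomial coefficients, one has $Df\in C_S$. In other words, $C_S$ is a module over the algebra of polynomial differential operators on $Y^S$.
   Context: Fix an even positive integer $N$, let $Y=\mathbb{R}^N$ with coordinates $x^1,\dots,x^N$, and $q(x)=\sum_{i=1}^N (x^i)^2$. For a finite set $S$, $Y^S$ is the space of maps $y:S\to Y$, written $y=(y_s)_{s\in S}$ ($Y^{\emptyset}$ is a point). Distributions on $Y^S$ are continuous linear functionals on compactly supported smooth complex functions on $Y^S$ (locally integrable functions are regarded as distributions via Lebesgue measure). For distinct $s,t\in S$ put $q_{st}(y)=q(y_s-y_t)$. Let $\partial_i^{\mathrm{diag}}=\sum_{s\in S}\partial/\partial y_s^i$ ($i=1,\dots,N$) be the infinitesimal diagonal translations. A distribution $f$ on $Y^S$ is quasi-polynomial if there is $M$ such that every composition of $M$ operators from $\{\partial_1^{\mathrm{diag}},\dots,\partial_N^{\mathrm{diag}}\}$ annihilates $f$. For a partition $S=S_1\sqcup S_2$ and spaces $A,B$ of distributions on $Y^{S_1},Y^{S_2}$, $T_{S_1S_2}(A\otimes B)$ denotes the linear span of the exterior products $a\boxtimes b$ ($a\in A,b\in B$), distributions on $Y^{S_1}\times Y^{S_2}=Y^S$. The spaces $C_S$ are defined recursively: if $|S|\le 1$, $C_S$ is the space of all quasi-polynomial distributions on $Y^S$; if $|S|\ge 2$, $C_S$ is the space of quasi-polynomial distributions $f$ on $Y^S$ such that for every partition of $S$ into two nonempty subsets $S_1,S_2$ there is an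 integer $M\ge0$ with $\big(\prod_{s_1\in S_1,s_2\in S_2}q_{s_1s_2}\big)^M f\in T_{S_1S_2}(C_{S_1}\otimes C_{S_2})$. *)

From HB Require Import structures.
From mathcomp Require Import all_boot all_order ssralg ssrnum.
From mathcomp Require Import reals topology normedtype derive.
From mathcomp.real_closed Require Import complex.
Import Order.TTheory GRing.Theory Num.Theory.
Import numFieldNormedType.Exports.

Set Implicit Arguments.
Unset Strict Implicit.
Unset Printing Implicit Defensive.

Local Open Scope ring_scope.
Local Open Scope complex_scope.

Section Distributions.
Context (R : realType) (N : nat).

Local Notation C := (R[i]).

(** Points of Y^S = (R^N)^S : y_s^i = y s i. *)
Definition pt (S : finType) := S -> 'I_N -> R.

Definition cfun (S : finType) := pt S -> C.

Definition cabs (z : C) : R := Num.sqrt (complex.Re z ^+ 2 + complex.Im z ^+ 2).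

Definition upd (S : finType) (x : pt S) (s : S) (i : 'I_N) (h : R) : pt S :=
  fun s' i' => if (s' == s) && (i' == i) then x s' i' + h else x s' i'.

Definition pdR (S : finType) (g : pt S -> R) (s : S) (i : 'I_N) (x : pt S) : R :=
  derive1 (fun h : R => g (upd x s i h)) 0.
Definition has_pdR (S : finType) (g : pt S -> R) (s : S) (i : 'I_N) (x : pt S) :=
  derivable (fun h : R => g (upd x s i h)) 0 1.

Definition pd (S : finType) (phi : cfun S) (s : S) (i : 'I_N) : cfun S :=
  fun x => pdR (fun y => @complex.Re R (phi y)) s i x +i* pdR (fun y => @complex.Im R (phi y)) s i x.
Definition has_pd (S : finType) (phi : cfun S) (s : S) (i : 'I_N) (x : pt S) :=
  has_pdR (fun y => @complex.Re R (phi y)) s i x /\ has_pdR (fun y => @complex.Im R (phi y)) s i x.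

Definition pds (S : finType) (l : seq (S * 'I_N)) (phi : cfun S) : cfun S :=
  foldr (fun t g => pd g t.1 t.2) phi l.

Definition supdist (S : finType) (x y : pt S) : R :=
  \big[Num.max/0]_(s : S) \big[Num.max/0]_(i < N) `|x s i - y s i|.
Definition ccontinuous (S : finType) (g : cfun S) :=
  forall x (e : R), 0 < e ->
    exists2 d : R, 0 < d & forall y, supdist x y < d -> cabs (g y - g x) < e.

Definition smooth (S : finType) (phi : cfun S) :=
  forall l : seq (S * 'I_N),
    (forall x s i, has_pd (pds l phi) s i x) /\ ccontinuous (pds l phi).

(** phi vanishes outside the box [-K, K]^(S x N) (so its support is compact). *)
Definition supported_in (S : finType) (phi : cfun S) (K : R) :=
  forall x : pt S, (exists s i, K < `|x s i|) -> phi x = 0.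

Definition is_test (S : finType) (phi : cfun S) :=
  smooth phi /\ exists K : R, supported_in phi K.

(** A distribution is a functional on test functions (values on non-test
    functions are irrelevant); it must be linear and continuous, continuity
    being expressed by the usual seminorm estimates on each compact set. *)
Definition distrfun (S : finType) := cfun S -> C.

Definition is_distr (S : finType) (T : distrfun S) :=
  [/\ (forall phi psi, is_test phi -> is_test psi ->
         T (fun x => phi x + psi x) = T phi + T psi),
      (forall (c : C) phi, is_test phi -> T (fun x => c * phi x) = c * T phi) &
      (forall K : R, exists (Cst : R) (m : nat),
         forall phi, is_test phi -> supported_in phi K ->
         forall B : R,
           (forall l : seq (S * 'I_N), (size l <= m)%N ->
               forall x, cabs (pds l phi x) <= B) ->
           cabs (T phi) <= Cst * B)].

Definition dmul (S : finType) (p : cfun S) (T : distrfun S) : distrfun S :=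
  fun phi => T (fun x => p x * phi x).

Definition dderiv (S : finType) (s : S) (i : 'I_N) (T : distrfun S) : distrfun S :=
  fun phi => - T (pd phi s i).
Definition dderivs (S : finType) (l : seq (S * 'I_N)) (T : distrfun S) : distrfun S :=
  foldr (fun t U => dderiv t.1 t.2 U) T l.

Definition ddiag (S : finType) (i : 'I_N) (T : distrfun S) : distrfun S :=
  fun phi => \sum_(s : S) dderiv s i T phi.

Definition quasipoly (S : finType) (T : distrfun S) :=
  is_distr T /\
  exists M : nat, forall l : seq 'I_N, size l = M ->
    forall phi, is_test phi -> foldr (@ddiag S) T l phi = 0.

Inductive is_poly (S : finType) : cfun S -> Prop :=
  | poly_const (c : C) : is_poly (fun _ => c)
  | poly_coord (s : S) (i : 'I_N) : is_poly (fun x => (x s i)%:C)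
  | poly_add (p q : cfun S) : is_poly p -> is_poly q -> is_poly (fun x => p x + q x)
  | poly_mul (p q : cfun S) : is_poly p -> is_poly q -> is_poly (fun x => p x * q x).

Definition apply_dop (S : finType) (k : nat) (p : 'I_k -> cfun S)
  (alpha : 'I_k -> seq (S * 'I_N)) (T : distrfun S) : distrfun S :=
  fun phi => \sum_(j < k) dmul (p j) (dderivs (alpha j) T) phi.

Definition sub1 (S : finType) (P : {set S}) : finType := {: {s : S | s \in P}}.
Definition sub2 (S : finType) (P : {set S}) : finType := {: {s : S | s \notin P}}.

Definition restr1 (S : finType) (P : {set S}) (x : pt S) : pt (sub1 P) :=
  fun s => x (val s).
Definition restr2 (S : finType) (P : {set S}) (x : pt S) : pt (sub2 P) :=
  fun s => x (val s).
Arguments restr1 {S} P x.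
Arguments restr2 {S} P x.

Definition qst (S : finType) (x : pt S) (s t : S) : C :=
  (\sum_(i < N) (x s i - x t i) ^+ 2)%:C.
Definition Qprod (S : finType) (P : {set S}) : cfun S :=
  fun x => \prod_(s1 : sub1 P) \prod_(s2 : sub2 P) qst x (val s1) (val s2).

(** T belongs to T_{S1 S2}(A (x) B): it is a finite sum of exterior products
    a_j [x] b_j with a_j in A, b_j in B; the exterior product a [x] b is the
    (unique) distribution on Y^S1 x Y^S2 = Y^S whose value on
    phi (x) psi is a(phi) b(psi). *)
Definition in_T (S : finType) (P : {set S})
  (A : distrfun (sub1 P) -> Prop) (B : distrfun (sub2 P) -> Prop)
  (T : distrfun S) :=
  exists (k : nat) (a : 'I_k -> distrfun (sub1 P)) (b : 'I_k -> distrfun (sub2 P)),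
    [/\ forall j, A (a j), forall j, B (b j) &
        forall (phi : cfun (sub1 P)) (psi : cfun (sub2 P)),
          is_test phi -> is_test psi ->
          T (fun x => phi (restr1 P x) * psi (restr2 P x))
          = \sum_(j < k) a j phi * b j psi].

(** The spaces C_S, by recursion on the cardinality of S (the fuel n is
    always >= #|S|, see CS below). *)
Fixpoint Cfuel (n : nat) (S : finType) (T : distrfun S) : Prop :=
  quasipoly T /\
  match n with
  | 0 => True
  | n'.+1 =>
      (1 < #|S|)%N ->
      forall P : {set S}, P != set0 -> P != setT ->
        exists M : nat,
          in_T (Cfuel n' (S := sub1 P)) (Cfuel n' (S := sub2 P))
               (dmul (fun x => Qprod P x ^+ M) T)
  end.

Definition CS (S : finType) (T : distrfun S) : Prop := Cfuel #|S| T.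

End Distributions.

(* The algebra of polynomial differential operators is generated by the
   multiplications by the coordinates y_s^i and the partial derivatives d/dy_s^i,
   so it suffices to show, by induction on |S|, that C_S is stable under these two
   operations (and under linear combinations).  Quasi-polynomiality survives:
   derivatives commute with the diagonal translations (Schwarz), and
   ddiag_j (y_s^i T) = y_s^i (ddiag_j T) + [i = j] T raises the nilpotency order by
   one.  For a splitting S = S1 u S2, both operations act on a single tensor factor
   of Q^M f, where Q is the product of the q_{s1 s2}; a derivative does not commute
   with Q^M, but one more power of Q absorbs the commutator. *)

From HB Require Import structures.
From mathcomp Require Import all_boot all_order ssralg ssrnum.
From mathcomp Require Import reals topology normedtype derive.
From mathcomp.real_closed Require Import complex.
From mathcomp Require Import boolp functions.
From mathcomp Require Import ring interval.
Import Order.TTheory GRing.Theory Num.Theory.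
Import numFieldNormedType.Exports.

Set Implicit Arguments.
Unset Strict Implicit.
Unset Printing Implicit Defensive.

Local Open Scope ring_scope.
Local Open Scope complex_scope.

Section ComplexNumbers.
Context (R : realType).
Local Notation C := (R[i]).

Lemma normc_cabs (z : C) : `|z| = (cabs z)%:C.
Proof. by rewrite normc_def. Qed.

Lemma cabs_ge0 (z : C) : 0 <= cabs z.
Proof. exact: sqrtr_ge0. Qed.

Lemma cabsD (a b : C) : cabs (a + b) <= cabs a + cabs b.
Proof. by rewrite -lecR rmorphD /= -!normc_cabs ler_normD. Qed.

Lemma cabsM (a b : C) : cabs (a * b) = cabs a * cabs b.
Proof. by apply: complexI; rewrite rmorphM /= -!normc_cabs normrM. Qed.

Lemma cabsN (a : C) : cabs (- a) = cabs a.
Proof. by apply: complexI; rewrite -!normc_cabs normrN. Qed.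

Lemma cabs_real (r : R) : cabs r%:C = `|r|.
Proof. by rewrite /cabs /= expr0n /= addr0 sqrtr_sqr. Qed.

Lemma cabs0 : cabs (0 : C) = 0.
Proof. by rewrite cabs_real normr0. Qed.

Lemma cabs1 : cabs (1 : C) = 1.
Proof. by rewrite cabs_real normr1. Qed.

Lemma Re_le_cabs (z : C) : `|complex.Re z| <= cabs z.
Proof. by rewrite -sqrtr_sqr ler_wsqrtr // lerDl sqr_ge0. Qed.

Lemma Im_le_cabs (z : C) : `|complex.Im z| <= cabs z.
Proof. by rewrite -sqrtr_sqr ler_wsqrtr // lerDr sqr_ge0. Qed.

Lemma ReD (a b : C) : complex.Re (a + b) = complex.Re a + complex.Re b.
Proof. by case: a; case: b. Qed.

Lemma ImD (a b : C) : complex.Im (a + b) = complex.Im a + complex.Im b.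
Proof. by case: a; case: b. Qed.

Lemma ReN (a : C) : complex.Re (- a) = - complex.Re a.
Proof. by case: a. Qed.

Lemma ImN (a : C) : complex.Im (- a) = - complex.Im a.
Proof. by case: a. Qed.

Lemma ReM (a b : C) :
  complex.Re (a * b) = complex.Re a * complex.Re b - complex.Im a * complex.Im b.
Proof. by case: a; case: b. Qed.

Lemma ImM (a b : C) :
  complex.Im (a * b) = complex.Re a * complex.Im b + complex.Im a * complex.Re b.
Proof. by case: a => ? ?; case: b => ? ? /=; ring. Qed.

Lemma complex_eq (a b : C) :
  complex.Re a = complex.Re b -> complex.Im a = complex.Im b -> a = b.
Proof. by case: a => ? ?; case: b => ? ? /= -> ->. Qed.

End ComplexNumbers.

Section Coordinates.
Context (R : realType) (N : nat).
Implicit Types (S : finType).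

Lemma upd0 S (x : pt R N S) s i : upd x s i 0 = x.
Proof. by apply/funext => s'; apply/funext => i'; rewrite /upd addr0; case: ifP. Qed.

Lemma updD S (x : pt R N S) s i u h : upd (upd x s i u) s i h = upd x s i (u + h).
Proof.
apply/funext => s'; apply/funext => i'; rewrite /upd.
by case: ifP => st; rewrite st // addrA.
Qed.

Lemma updC S (x : pt R N S) s i t j u v : ~~ ((s == t) && (i == j)) ->
  upd (upd x s i u) t j v = upd (upd x t j v) s i u.
Proof.
move=> st; apply/funext => s'; apply/funext => i'; rewrite /upd.
case: (boolP ((s' == s) && (i' == i))) => [/andP[/eqP-> /eqP->]|_] //.
by rewrite (negbTE st).
Qed.

Lemma supdist_ge0 S (x y : pt R N S) : 0 <= supdist x y.
Proof. exact: bigmax_ge_id. Qed.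

Lemma coord_le_supdist S (x y : pt R N S) s i : `|x s i - y s i| <= supdist x y.
Proof.
apply: le_trans (le_bigmax _ _ s).
exact: (le_bigmax _ (fun i => `|x s i - y s i|) i).
Qed.

Lemma supdist_le S (x y : pt R N S) d : 0 <= d ->
  (forall s i, `|x s i - y s i| <= d) -> supdist x y <= d.
Proof.
move=> d0 xy; apply/bigmax_leP; split => // s _.
by apply/bigmax_leP; split => // i _; exact: xy.
Qed.

Lemma supdist_triangle S (x y z : pt R N S) :
  supdist x z <= supdist x y + supdist y z.
Proof.
apply: supdist_le => [|s i]; first by rewrite addr_ge0 ?supdist_ge0.
have -> : x s i - z s i = (x s i - y s i) + (y s i - z s i) by rewrite addrA subrK.
by apply: le_trans (ler_normD _ _) _; rewrite lerD ?coord_le_supdist.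
Qed.

Lemma supdist_upd S (x : pt R N S) s i h : supdist x (upd x s i h) <= `|h|.
Proof.
apply: supdist_le => // s' i'; rewrite /upd; case: ifP => _.
  by rewrite opprD addrA subrr add0r normrN.
by rewrite subrr normr0.
Qed.

Lemma supdist_upd2 S (x : pt R N S) s i t j a b :
  supdist x (upd (upd x s i a) t j b) <= `|a| + `|b|.
Proof.
apply: le_trans (supdist_triangle _ (upd x s i a) _) _.
by apply: lerD; apply: supdist_upd.
Qed.

End Coordinates.

Section PartialDerivatives.
Context (R : realType) (N : nat).
Local Notation C := (R[i]).
Implicit Types (S : finType).

Definition line_Re S (f : cfun R N S) x s i (h : R) := complex.Re (f (upd x s i h)).
Definition line_Im S (f : cfun R N S) x s i (h : R) := complex.Im (f (upd x s i h)).

Lemma has_pdE S (f : cfun R N S) s i x :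
  has_pd f s i x <-> derivable (line_Re f x s i) 0 1 /\ derivable (line_Im f x s i) 0 1.
Proof. by []. Qed.

Lemma pdE S (f : cfun R N S) s i x :
  pd f s i x = 'D_1 (line_Re f x s i) 0 +i* 'D_1 (line_Im f x s i) 0.
Proof. by rewrite /pd /pdR !derive1E. Qed.

Lemma line_Re0 S (f : cfun R N S) x s i : line_Re f x s i 0 = complex.Re (f x).
Proof. by rewrite /line_Re upd0. Qed.

Lemma line_Im0 S (f : cfun R N S) x s i : line_Im f x s i 0 = complex.Im (f x).
Proof. by rewrite /line_Im upd0. Qed.

Lemma pd_add_at S (f g : cfun R N S) s i x : has_pd f s i x -> has_pd g s i x ->
  has_pd (fun y => f y + g y) s i x /\
  pd (fun y => f y + g y) s i x = pd f s i x + pd g s i x.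
Proof.
move=> /has_pdE[f1 f2] /has_pdE[g1 g2]; rewrite has_pdE !pdE.
have -> : line_Re (fun y => f y + g y) x s i = line_Re f x s i + line_Re g x s i.
  by apply/funext => h; rewrite /line_Re ReD.
have -> : line_Im (fun y => f y + g y) x s i = line_Im f x s i + line_Im g x s i.
  by apply/funext => h; rewrite /line_Im ImD.
split; first by split; apply: derivableD.
by rewrite !deriveD.
Qed.

Lemma pd_mul_at S (f g : cfun R N S) s i x : has_pd f s i x -> has_pd g s i x ->
  has_pd (fun y => f y * g y) s i x /\
  pd (fun y => f y * g y) s i x = pd f s i x * g x + f x * pd g s i x.
Proof.
move=> /has_pdE[f1 f2] /has_pdE[g1 g2]; rewrite has_pdE !pdE.
have -> : line_Re (fun y => f y * g y) x s i =
    line_Re f x s i * line_Re g x s i - line_Im f x s i * line_Im g x s i.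
  by apply/funext => h; rewrite /line_Re /line_Im ReM.
have -> : line_Im (fun y => f y * g y) x s i =
    line_Re f x s i * line_Im g x s i + line_Im f x s i * line_Re g x s i.
  by apply/funext => h; rewrite /line_Re /line_Im ImM.
split.
  split; first exact: derivableB (derivableM f1 g1) (derivableM f2 g2).
  exact: derivableD (derivableM f1 g2) (derivableM f2 g1).
rewrite deriveB; [|exact: derivableM f1 g1 | exact: derivableM f2 g2].
rewrite deriveD; [|exact: derivableM f1 g2 | exact: derivableM f2 g1].
rewrite (deriveM f1 g1) (deriveM f2 g2) (deriveM f1 g2) (deriveM f2 g1).
rewrite !line_Re0 !line_Im0.
move: ('D_1 (line_Re f x s i) 0) ('D_1 (line_Im f x s i) 0) => a b.
move: ('D_1 (line_Re g x s i) 0) ('D_1 (line_Im g x s i) 0) => c d.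
case: (f x) => p q; case: (g x) => u v.
by apply: complex_eq => /=; rewrite -![_ *: _]/(_ * _); ring.
Qed.

Lemma pd_cst_at S (c : C) s i (x : pt R N S) :
  has_pd (fun _ => c) s i x /\ pd (fun _ => c) s i x = 0.
Proof.
rewrite has_pdE pdE.
have -> : line_Re (fun _ : pt R N S => c) x s i = cst (complex.Re c) by [].
have -> : line_Im (fun _ : pt R N S => c) x s i = cst (complex.Im c) by [].
by split; [split; apply: derivable_cst | rewrite !derive_cst].
Qed.

Lemma pd_coord_at S (t : S) (j : 'I_N) s i (x : pt R N S) :
  has_pd (fun y => (y t j)%:C) s i x /\
  pd (fun y => (y t j)%:C) s i x = if (t == s) && (j == i) then 1 else 0.
Proof.
rewrite has_pdE pdE.
have -> : line_Im (fun y : pt R N S => (y t j)%:C) x s i = cst 0 by [].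
case: ifP => ts.
  have -> : line_Re (fun y : pt R N S => (y t j)%:C) x s i = (fun h => h + x t j).
    by apply/funext => h; rewrite /line_Re /upd ts addrC.
  have dl : derivable (fun h : R => h + x t j) 0 1.
    by apply: derivableD; [apply: derivable_id | apply: derivable_cst].
  split; first by split; [exact: dl | apply: derivable_cst].
  rewrite derive_cst deriveD; [|exact: derivable_id | exact: derivable_cst].
  by rewrite derive_id derive_cst addr0.
have -> : line_Re (fun y : pt R N S => (y t j)%:C) x s i = cst (x t j).
  by apply/funext => h; rewrite /line_Re /upd ts.
by split; [split; apply: derivable_cst | rewrite !derive_cst].
Qed.

Definition has_partials S (f : cfun R N S) := forall x s i, has_pd f s i x.

Lemma has_partialsD S (f g : cfun R N S) :
  has_partials f -> has_partials g -> has_partials (fun y => f y + g y).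
Proof. by move=> hf hg x s i; have [] := pd_add_at (hf x s i) (hg x s i). Qed.

Lemma has_partialsM S (f g : cfun R N S) :
  has_partials f -> has_partials g -> has_partials (fun y => f y * g y).
Proof. by move=> hf hg x s i; have [] := pd_mul_at (hf x s i) (hg x s i). Qed.

Lemma has_partials_cst S (c : C) : has_partials (fun _ : pt R N S => c).
Proof. by move=> x s i; have [] := pd_cst_at c s i x. Qed.

Lemma has_partials_coord S (t : S) (j : 'I_N) :
  has_partials (fun y : pt R N S => (y t j)%:C).
Proof. by move=> x s i; have [] := pd_coord_at t j s i x. Qed.

Lemma pdD S (f g : cfun R N S) s i : has_partials f -> has_partials g ->
  pd (fun y => f y + g y) s i = (fun y => pd f s i y + pd g s i y).
Proof. by move=> hf hg; apply/funext => x; have [] := pd_add_at (hf x s i) (hg x s i). Qed.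

Lemma pdM S (f g : cfun R N S) s i : has_partials f -> has_partials g ->
  pd (fun y => f y * g y) s i = (fun y => pd f s i y * g y + f y * pd g s i y).
Proof. by move=> hf hg; apply/funext => x; have [] := pd_mul_at (hf x s i) (hg x s i). Qed.

Lemma pd_cst S (c : C) s i : pd (fun _ : pt R N S => c) s i = (fun _ => 0).
Proof. by apply/funext => x; have [] := pd_cst_at c s i x. Qed.

Lemma pd_coord S (t : S) (j : 'I_N) s i :
  pd (fun y : pt R N S => (y t j)%:C) s i =
  (fun _ => if (t == s) && (j == i) then 1 else 0).
Proof. by apply/funext => x; have [] := pd_coord_at t j s i x. Qed.

Lemma pdZ S (c : C) (f : cfun R N S) s i : has_partials f ->
  pd (fun y => c * f y) s i = (fun y => c * pd f s i y).
Proof.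
move=> hf; rewrite pdM ?pd_cst //; last exact: has_partials_cst.
by apply/funext => y; rewrite mul0r add0r.
Qed.

End PartialDerivatives.

Section Continuity.
Context (R : realType) (N : nat).
Local Notation C := (R[i]).
Implicit Types (S : finType).

Lemma ccontinuous_cst S (c : C) : ccontinuous (fun _ : pt R N S => c).
Proof. by move=> x e e0; exists 1 => // y _; rewrite subrr cabs0. Qed.

Lemma ccontinuous_coord S (t : S) (j : 'I_N) :
  ccontinuous (fun y : pt R N S => (y t j)%:C).
Proof.
move=> x e e0; exists e => // y xy.
by rewrite -rmorphB cabs_real distrC; apply: le_lt_trans (coord_le_supdist _ _ _ _) xy.
Qed.

Lemma ccontinuous_comp S S' (m : pt R N S -> pt R N S') (g : cfun R N S') :
  (forall x y, supdist (m x) (m y) <= supdist x y) ->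
  ccontinuous g -> ccontinuous (fun x => g (m x)).
Proof.
move=> m_lip cg x e e0; have [d d0 gd] := cg (m x) e e0.
by exists d => // y xy; apply: gd; apply: le_lt_trans (m_lip _ _) xy.
Qed.

Lemma ccontinuous_common_delta S (f g : cfun R N S) x e : 0 < e ->
  ccontinuous f -> ccontinuous g ->
  exists2 d, 0 < d & forall y, supdist x y < d ->
    cabs (f y - f x) < e /\ cabs (g y - g x) < e.
Proof.
move=> e0 cf cg; have [d1 d10 fd1] := cf x e e0; have [d2 d20 gd2] := cg x e e0.
exists (Num.min d1 d2); first by rewrite lt_min d10 d20.
by move=> y; rewrite lt_min => /andP[y1 y2]; split; [apply: fd1 | apply: gd2].
Qed.

Lemma ccontinuousD S (f g : cfun R N S) : ccontinuous f -> ccontinuous g ->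
  ccontinuous (fun y => f y + g y).
Proof.
move=> cf cg x e e0; have e20 : 0 < e / 2 by rewrite divr_gt0.
have [d d0 fgd] := ccontinuous_common_delta x e20 cf cg.
exists d => // y /fgd[fy gy].
have -> : f y + g y - (f x + g x) = (f y - f x) + (g y - g x) by ring.
by apply: le_lt_trans (cabsD _ _) _; rewrite (splitr e) ltrD.
Qed.

Lemma ccontinuousM S (f g : cfun R N S) : ccontinuous f -> ccontinuous g ->
  ccontinuous (fun y => f y * g y).
Proof.
move=> cf cg x e e0.
set A := cabs (f x); set B := cabs (g x); set M := 1 + A + B.
have M0 : 0 < M by apply: lt_le_trans ltr01 _; rewrite /M -addrA lerDl addr_ge0 ?cabs_ge0.
set e' := Num.min 1 (e / M).
have e'0 : 0 < e' by rewrite lt_min ltr01 divr_gt0.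
have e'1 : e' <= 1 by rewrite ge_min lexx.
have e'M : e' * M <= e by rewrite -ler_pdivlMr // ge_min lexx orbT.
have [d d0 fgd] := ccontinuous_common_delta x e'0 cf cg.
exists d => // y /fgd[fy gy].
have -> : f y * g y - f x * g x =
    (f y - f x) * (g y - g x) + f x * (g y - g x) + g x * (f y - f x) by ring.
apply: le_lt_trans (cabsD _ _) _; apply: le_lt_trans (lerD (cabsD _ _) (lexx _)) _.
rewrite !cabsM; apply: lt_le_trans e'M; rewrite /M !mulrDr mulr1.
have gy1 : cabs (g y - g x) <= 1 by apply: ltW (lt_le_trans gy e'1).
apply: ltr_leD; first apply: ltr_leD.
- by apply: le_lt_trans fy; rewrite -[X in _ <= X]mulr1 ler_wpM2l ?cabs_ge0.
- by rewrite [_ * A]mulrC; apply: ler_wpM2l; [exact: cabs_ge0 | exact: ltW].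
- by rewrite [_ * B]mulrC; apply: ler_wpM2l; [exact: cabs_ge0 | exact: ltW].
Qed.

End Continuity.

Section Smoothness.
Context (R : realType) (N : nat).
Local Notation C := (R[i]).
Implicit Types (S : finType).

Lemma pds_cat S (l1 l2 : seq (S * 'I_N)) (f : cfun R N S) :
  pds (l1 ++ l2) f = pds l1 (pds l2 f).
Proof. exact: foldr_cat. Qed.

Lemma pds_rcons S (l : seq (S * 'I_N)) t (f : cfun R N S) :
  pds (rcons l t) f = pds l (pd f t.1 t.2).
Proof. by rewrite -cats1 pds_cat. Qed.

Lemma smooth_has_partials S (f : cfun R N S) : smooth f -> has_partials f.
Proof. by move=> sf; exact: (sf [::]).1. Qed.

Lemma smooth_ccontinuous S (f : cfun R N S) : smooth f -> ccontinuous f.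
Proof. by move=> sf; exact: (sf [::]).2. Qed.

Lemma smooth_pds S (f : cfun R N S) l : smooth f -> smooth (pds l f).
Proof. by move=> sf l'; rewrite -pds_cat; exact: sf. Qed.

Lemma smooth_pd S (f : cfun R N S) s i : smooth f -> smooth (pd f s i).
Proof. exact: (smooth_pds [:: (s, i)]). Qed.

Lemma smooth_pd_closed S (Cl : cfun R N S -> Prop) :
  (forall f, Cl f -> [/\ has_partials f, ccontinuous f & forall s i, Cl (pd f s i)]) ->
  forall f, Cl f -> smooth f.
Proof.
move=> ClP f Clf l; suff /ClP[] : Cl (pds l f) by [].
by elim: l => [|t l IH] //=; have [_ _] := ClP _ IH; apply.
Qed.

Lemma smooth_cst S (c : C) : smooth (fun _ : pt R N S => c).
Proof.
apply: (@smooth_pd_closed _ (fun f => exists c, f = fun _ => c)); last by exists c.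
move=> _ [{}c ->]; split; [exact: has_partials_cst | exact: ccontinuous_cst |].
by move=> s i; rewrite pd_cst; exists 0.
Qed.

Lemma smooth_coord S (t : S) (j : 'I_N) : smooth (fun y : pt R N S => (y t j)%:C).
Proof.
apply: (@smooth_pd_closed _
  (fun f => (exists c, f = fun _ => c) \/ f = fun y => (y t j)%:C)); last by right.
move=> _ [[c ->]|->].
  split; [exact: has_partials_cst | exact: ccontinuous_cst |].
  by move=> s i; rewrite pd_cst; left; exists 0.
split; [exact: has_partials_coord | exact: ccontinuous_coord |].
by move=> s i; rewrite pd_coord; left; eexists.
Qed.

Lemma smoothD S (f g : cfun R N S) : smooth f -> smooth g -> smooth (fun y => f y + g y).
Proof.
move=> sf sg.
apply: (@smooth_pd_closed _ (fun F => exists f g,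
  [/\ smooth f, smooth g & F = fun y => f y + g y])); last by exists f, g.
move=> _ [{}f [{}g [{}sf {}sg ->]]].
have [hf hg] := (smooth_has_partials sf, smooth_has_partials sg).
split; [exact: has_partialsD | exact: ccontinuousD (smooth_ccontinuous sf)
  (smooth_ccontinuous sg) |].
move=> s i; rewrite (pdD s i hf hg).
by exists (pd f s i), (pd g s i); split; [exact: smooth_pd | exact: smooth_pd |].
Qed.

(* Products are handled through finite sums of products of smooth functions,
   the smallest class containing products that is stable under [pd]. *)
Definition sum_prod S (L : seq (cfun R N S * cfun R N S)) : cfun R N S :=
  fun x => \sum_(gh <- L) gh.1 x * gh.2 x.

Definition sum_prod_pd S (L : seq (cfun R N S * cfun R N S)) s i :=
  flatten [seq [:: (pd gh.1 s i, gh.2); (gh.1, pd gh.2 s i)] | gh <- L].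

Definition smooth_pairs S (L : seq (cfun R N S * cfun R N S)) :=
  all (fun gh => `[< smooth gh.1 /\ smooth gh.2 >]) L.

Lemma sum_prodP S (L : seq (cfun R N S * cfun R N S)) : smooth_pairs L ->
  [/\ has_partials (sum_prod L), ccontinuous (sum_prod L) &
      forall s i, pd (sum_prod L) s i = sum_prod (sum_prod_pd L s i)].
Proof.
elim: L => [_|[g h] L IH /andP[/asboolP[sg sh] /IH[hL cL pdL]]].
  have -> : sum_prod [::] = fun _ : pt R N S => 0.
    by apply/funext => x; rewrite /sum_prod big_nil.
  split; [exact: has_partials_cst | exact: ccontinuous_cst |].
  by move=> s i; rewrite pd_cst.
have -> : sum_prod ((g, h) :: L) = fun x => g x * h x + sum_prod L x.
  by apply/funext => x; rewrite /sum_prod big_cons.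
have [hg hh] := (smooth_has_partials sg, smooth_has_partials sh).
split.
- by apply: has_partialsD => //; apply: has_partialsM.
- by apply: ccontinuousD => //; apply: ccontinuousM; apply: smooth_ccontinuous.
move=> s i; rewrite (pdD s i (has_partialsM hg hh) hL) pdL (pdM s i hg hh).
by apply/funext => x; rewrite /sum_prod_pd /= /sum_prod !big_cons /= addrA.
Qed.

Lemma smooth_pairs_pd S (L : seq (cfun R N S * cfun R N S)) s i :
  smooth_pairs L -> smooth_pairs (sum_prod_pd L s i).
Proof.
elim: L => // [[g h] L IH] /andP[/asboolP[sg sh] /IH sL] /=.
rewrite sL andbT; apply/andP; split; apply/asboolP; split => //; exact: smooth_pd.
Qed.

Lemma smoothM S (f g : cfun R N S) : smooth f -> smooth g -> smooth (fun y => f y * g y).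
Proof.
move=> sf sg.
apply: (@smooth_pd_closed _ (fun F => exists2 L, smooth_pairs L & F = sum_prod L)).
  move=> _ [L sL ->]; have [hL cL pdL] := sum_prodP sL.
  by split => // s i; exists (sum_prod_pd L s i); [apply: smooth_pairs_pd | apply: pdL].
exists [:: (f, g)]; first by rewrite /smooth_pairs /= andbT; apply/asboolP.
by apply/funext => x; rewrite /sum_prod big_seq1.
Qed.

Lemma smoothX S (p : cfun R N S) n : smooth p -> smooth (fun x => p x ^+ n).
Proof.
move=> sp; elim: n => [|n IH].
  by under eq_fun do rewrite expr0; apply: smooth_cst.
by under eq_fun do rewrite exprS; apply: smoothM.
Qed.

Lemma pdsD S l (f g : cfun R N S) : smooth f -> smooth g ->
  pds l (fun y => f y + g y) = (fun y => pds l f y + pds l g y).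
Proof.
move=> sf sg; elim: l => [|t l IH] //=.
by rewrite IH pdD //; apply/smooth_has_partials/smooth_pds.
Qed.

Lemma pdsZ S l (c : C) (f : cfun R N S) : smooth f ->
  pds l (fun y => c * f y) = (fun y => c * pds l f y).
Proof.
move=> sf; elim: l => [|t l IH] //=.
by rewrite IH pdZ //; apply/smooth_has_partials/smooth_pds.
Qed.

Lemma pdX S (p : cfun R N S) s i n : smooth p ->
  pd (fun x => p x ^+ n.+1) s i = (fun x => n.+1%:R * p x ^+ n * pd p s i x).
Proof.
move=> sp; elim: n => [|n IH].
  by under eq_fun do rewrite expr1; apply/funext => x; rewrite expr0 !mul1r.
under eq_fun do rewrite exprS.
rewrite pdM ?IH; [|exact: smooth_has_partials | exact/smooth_has_partials/smoothX].
apply/funext => x; rewrite exprS [n.+2%:R]mulrS.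
by move: (p x ^+ n) (n.+1%:R : C) => a m; ring.
Qed.

End Smoothness.

Section TestFunctions.
Context (R : realType) (N : nat).
Local Notation C := (R[i]).
Implicit Types (S : finType).

Lemma supported_pd S (f : cfun R N S) K s i :
  supported_in f K -> supported_in (pd f s i) K.
Proof.
move=> fK x [s' [i' Kx]].
have e0 : 0 < `|x s' i'| - K by rewrite subr_gt0.
have near0 : \forall h \near (0 : R), f (upd x s i h) = 0.
  apply/nbhs_norm0P; exists (`|x s' i'| - K) => // h /= hK; apply: fK.
  exists s', i'; rewrite /upd; case: ifP => _ //.
  apply: lt_le_trans (lerB_normD _ _); by rewrite ltrBrDl -ltrBrDr.
have D0 (F : C -> R) : F 0 = 0 ->
    'D_1 (fun h => F (f (upd x s i h))) 0 = 'D_1 (cst 0 : R -> R) 0.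
  by move=> F0; apply: near_eq_derive; apply: filterS near0 => h /= ->.
by rewrite pdE (D0 (@complex.Re R)) // (D0 (@complex.Im R)) // derive_cst.
Qed.

Lemma test_pd S (f : cfun R N S) s i : is_test f -> is_test (pd f s i).
Proof. by move=> [sf [K fK]]; split; [exact: smooth_pd | exists K; exact: supported_pd]. Qed.

Lemma testM S (p f : cfun R N S) : smooth p -> is_test f -> is_test (fun x => p x * f x).
Proof.
move=> sp [sf [K fK]]; split; first exact: smoothM.
by exists K => x /fK ->; rewrite mulr0.
Qed.

Lemma testZ S (c : C) (f : cfun R N S) : is_test f -> is_test (fun x => c * f x).
Proof. exact/testM/smooth_cst. Qed.

Lemma testD S (f g : cfun R N S) : is_test f -> is_test g -> is_test (fun x => f x + g x).
Proof.
move=> [sf [K1 fK1]] [sg [K2 gK2]]; split; first exact: smoothD.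
exists (Num.max K1 K2) => x [s [i Kx]].
by rewrite fK1 ?gK2 ?addr0 //; exists s, i; apply: le_lt_trans Kx; rewrite le_max lexx ?orbT.
Qed.

End TestFunctions.

Section Schwarz.
Context (R : realType) (N : nat).
Implicit Types (S : finType).

Definition rcontinuous S (g : pt R N S -> R) := forall x e, 0 < e ->
  exists2 d, 0 < d & forall y, supdist x y < d -> `|g y - g x| < e.

Lemma rcontinuous_Re S (f : cfun R N S) :
  ccontinuous f -> rcontinuous (fun y => complex.Re (f y)).
Proof.
move=> cf x e e0; have [d d0 fd] := cf x e e0; exists d => // y /fd.
by apply: le_lt_trans; rewrite -ReN -ReD; exact: Re_le_cabs.
Qed.

Lemma rcontinuous_Im S (f : cfun R N S) :
  ccontinuous f -> rcontinuous (fun y => complex.Im (f y)).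
Proof.
move=> cf x e e0; have [d d0 fd] := cf x e e0; exists d => // y /fd.
by apply: le_lt_trans; rewrite -ImN -ImD; exact: Im_le_cabs.
Qed.

Lemma derive_shift (f : R -> R) u : 'D_1 f u = 'D_1 (fun h => f (h + u)) 0.
Proof.
rewrite /derive; have -> // : (fun h : R => h^-1 *: ((f \o shift u) (h *: 1) - f u)) =
  (fun h => h^-1 *: (((fun h => f (h + u)) \o shift 0) (h *: 1) - f (0 + u))).
by apply/funext => h /=; rewrite addr0 add0r.
Qed.

Lemma derivable_shift (f : R -> R) u :
  derivable f u 1 <-> derivable (fun h => f (h + u)) 0 1.
Proof.
rewrite /derivable; have -> // : (fun h : R => h^-1 *: ((f \o shift u) (h *: 1) - f u)) =
  (fun h => h^-1 *: (((fun h => f (h + u)) \o shift 0) (h *: 1) - f (0 + u))).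
by apply/funext => h /=; rewrite addr0 add0r.
Qed.

Lemma line_shift S (g : pt R N S -> R) x s i u :
  (fun h => g (upd x s i (h + u))) = (fun h => g (upd (upd x s i u) s i h)).
Proof. by apply/funext => h; rewrite updD addrC. Qed.

Lemma line_derive S (g : pt R N S -> R) x s i u :
  'D_1 (fun h => g (upd x s i h)) u = pdR g s i (upd x s i u).
Proof. by rewrite derive_shift /pdR derive1E line_shift. Qed.

Lemma line_derivable S (g : pt R N S -> R) x s i u :
  (forall z, has_pdR g s i z) -> derivable (fun h => g (upd x s i h)) u 1.
Proof. by move=> dg; rewrite derivable_shift line_shift; apply: dg. Qed.

Lemma MVT_derivable (f : R -> R) h : 0 < h -> (forall u, derivable f u 1) ->
  exists2 c, c \in `]0, h[ & f h - f 0 = 'D_1 f c * h.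
Proof.
move=> h0 df.
have [c ch ->] := @MVT R f (fun u => 'D_1 f u) 0 h h0 (fun u _ => derivableP (df u))
  (derivable_within_continuous (fun u _ => df u)).
by exists c; rewrite ?subr0.
Qed.

Lemma second_difference_MVT S (g : pt R N S -> R) s i t j x h :
  ~~ ((s == t) && (i == j)) -> 0 < h ->
  (forall z a b, has_pdR g a b z) -> (forall z, has_pdR (pdR g s i) t j z) ->
  exists xi eta, [/\ xi \in `]0, h[, eta \in `]0, h[ &
    g (upd (upd x t j h) s i h) - g (upd x s i h) - g (upd x t j h) + g x =
    h * h * pdR (pdR g s i) t j (upd (upd x s i xi) t j eta)].
Proof.
move=> st h0 dg ddg.
pose G u := g (upd (upd x t j h) s i u) - g (upd x s i u).
have D1 u : derivable (fun u => g (upd (upd x t j h) s i u)) u 1.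
  exact: line_derivable (fun z => dg z s i).
have D2 u : derivable (fun u => g (upd x s i u)) u 1 := line_derivable (fun z => dg z s i).
have [xi xiI eG] := @MVT_derivable G h h0 (fun u => derivableB (D1 u) (D2 u)).
pose H v := pdR g s i (upd (upd x s i xi) t j v).
have [eta etaI eH] := @MVT_derivable H h h0 (fun v => line_derivable ddg).
exists xi, eta; split => //.
have -> : g (upd (upd x t j h) s i h) - g (upd x s i h) - g (upd x t j h) + g x =
    G h - G 0 by rewrite /G !upd0; ring.
rewrite eG /G (deriveB (D1 xi) (D2 xi)) !line_derive -(updC _ _ _ st).
have -> : pdR g s i (upd x s i xi) = H 0 by rewrite /H upd0.
by rewrite -/(H h) eH line_derive; ring.
Qed.

Lemma pdR_comm S (g : pt R N S -> R) s i t j x :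
  (forall z a b, has_pdR g a b z) ->
  (forall z, has_pdR (pdR g s i) t j z) -> (forall z, has_pdR (pdR g t j) s i z) ->
  rcontinuous (pdR (pdR g s i) t j) -> rcontinuous (pdR (pdR g t j) s i) ->
  pdR (pdR g s i) t j x = pdR (pdR g t j) s i x.
Proof.
move=> dg d1 d2 c1 c2.
case st: ((s == t) && (i == j)); first by case/andP: st => /eqP-> /eqP->.
have ts : ~~ ((t == s) && (j == i)) by rewrite eq_sym [j == _]eq_sym st.
apply/eqP; rewrite -subr_eq0 -normr_le0; apply/ler_addgt0Pr => e e0; rewrite add0r.
have e20 : 0 < e / 2 by rewrite divr_gt0.
have [da da0 c1a] := c1 x _ e20; have [db db0 c2b] := c2 x _ e20.
set h := Num.min da db / 2.
have h0 : 0 < h by rewrite divr_gt0 // lt_min da0 db0.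
(* both mixed partials at nearby points equal the same second difference over [h^2] *)
have [xi [eta [xiI etaI E1]]] := second_difference_MVT x (negbT st) h0 dg d1.
have [xi' [eta' [xiI' etaI' E2]]] := second_difference_MVT x ts h0 dg d2.
have E : pdR (pdR g s i) t j (upd (upd x s i xi) t j eta) =
         pdR (pdR g t j) s i (upd (upd x t j xi') s i eta').
  have hh0 : h * h != 0 by rewrite mulf_neq0 // gt_eqF.
  apply: (mulfI hh0); apply: etrans (esym E1) (etrans _ E2).
  by rewrite (updC _ _ _ (negbT st)); congr (_ + _); apply: addrAC.
have near (a b : R) s' i' t' j' : a \in `]0, h[ -> b \in `]0, h[ ->
    supdist x (upd (upd x s' i' a) t' j' b) < Num.min da db.
  rewrite !in_itv /= => /andP[a0 ah] /andP[b0 bh].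
  apply: le_lt_trans (supdist_upd2 _ _ _ _ _ _ _) _.
  by rewrite (gtr0_norm a0) (gtr0_norm b0) (splitr (Num.min da db)); apply: ltrD.
have /c1a A : supdist x (upd (upd x s i xi) t j eta) < da.
  by apply: lt_le_trans (near xi eta s i t j xiI etaI) _; rewrite ge_min lexx.
have /c2b B : supdist x (upd (upd x t j xi') s i eta') < db.
  by apply: lt_le_trans (near xi' eta' t j s i xiI' etaI') _; rewrite ge_min lexx orbT.
have tri (a b c : R) : `|c - a| < e / 2 -> `|c - b| < e / 2 -> `|a - b| <= e.
  move=> ca cb; rewrite -(subrKA c) (splitr e); apply: ltW.
  by apply: le_lt_trans (ler_normD _ _) _; rewrite distrC in ca; apply: ltrD.
by rewrite E in A; move: A B; apply: tri.
Qed.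

Lemma pdR_Re S (f : cfun R N S) s i :
  pdR (fun y => complex.Re (f y)) s i = (fun y => complex.Re (pd f s i y)).
Proof. by []. Qed.

Lemma pdR_Im S (f : cfun R N S) s i :
  pdR (fun y => complex.Im (f y)) s i = (fun y => complex.Im (pd f s i y)).
Proof. by []. Qed.

Lemma pd_comm S (f : cfun R N S) s i t j : smooth f ->
  pd (pd f s i) t j = pd (pd f t j) s i.
Proof.
move=> sf; apply/funext => x.
have h0 := smooth_has_partials sf.
have h1 := smooth_has_partials (smooth_pd s i sf).
have h2 := smooth_has_partials (smooth_pd t j sf).
have c1 : ccontinuous (pd (pd f s i) t j) := (sf [:: (t, j); (s, i)]).2.
have c2 : ccontinuous (pd (pd f t j) s i) := (sf [:: (s, i); (t, j)]).2.
apply: complex_eq; rewrite /pd /=.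
- rewrite -!pdR_Re; apply: pdR_comm; first by move=> z a b; case: (h0 z a b).
  + by move=> z; rewrite pdR_Re; case: (h1 z t j).
  + by move=> z; rewrite pdR_Re; case: (h2 z s i).
  + by rewrite !pdR_Re; apply: rcontinuous_Re.
  + by rewrite !pdR_Re; apply: rcontinuous_Re.
- rewrite -!pdR_Im; apply: pdR_comm; first by move=> z a b; case: (h0 z a b).
  + by move=> z; rewrite pdR_Im; case: (h1 z t j).
  + by move=> z; rewrite pdR_Im; case: (h2 z s i).
  + by rewrite !pdR_Im; apply: rcontinuous_Im.
  + by rewrite !pdR_Im; apply: rcontinuous_Im.
Qed.

End Schwarz.

Section DistributionOperations.
Context (R : realType) (N : nat).
Local Notation C := (R[i]).
Implicit Types (S : finType).

Definition eq_on_tests S (T U : distrfun R N S) := forall phi, is_test phi -> T phi = U phi.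
Definition dadd S (T U : distrfun R N S) : distrfun R N S := fun phi => T phi + U phi.
Definition dscale S (c : C) (T : distrfun R N S) : distrfun R N S := fun phi => c * T phi.
Definition dzero S : distrfun R N S := fun _ => 0.
Definition coord S (s : S) (i : 'I_N) : cfun R N S := fun y => (y s i)%:C.

Lemma eq_on_tests_trans S (T U V : distrfun R N S) :
  eq_on_tests T U -> eq_on_tests U V -> eq_on_tests T V.
Proof. by move=> TU UV phi tphi; rewrite TU ?UV. Qed.

Lemma distr_linD S (T : distrfun R N S) phi psi : is_distr T -> is_test phi -> is_test psi ->
  T (fun x => phi x + psi x) = T phi + T psi.
Proof. by case=> TD _ _; apply: TD. Qed.

Lemma distr_linZ S (T : distrfun R N S) c phi : is_distr T -> is_test phi ->
  T (fun x => c * phi x) = c * T phi.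
Proof. by case=> _ TZ _; apply: TZ. Qed.

Lemma distr_eq_on_tests S (T U : distrfun R N S) :
  eq_on_tests T U -> is_distr T -> is_distr U.
Proof.
move=> TU [TD TZ Tb]; split.
- by move=> phi psi tphi tpsi; rewrite -!TU ?TD //; apply: testD.
- by move=> c phi tphi; rewrite -!TU ?TZ //; apply: testZ.
- by move=> K; have [c [m Tc]] := Tb K; exists c, m => phi tphi phiK B phiB; rewrite -TU ?Tc.
Qed.

Lemma distr0 S : is_distr (@dzero S).
Proof.
split=> [? ? _ _|? ? _|K]; rewrite /dzero ?addr0 ?mulr0 //.
by exists 0, 0%N => phi _ _ B _; rewrite cabs0 mul0r.
Qed.

Lemma distrD S (T U : distrfun R N S) : is_distr T -> is_distr U -> is_distr (dadd T U).
Proof.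
move=> [TD TZ Tb] [UD UZ Ub]; split.
- by move=> phi psi tphi tpsi; rewrite /dadd TD ?UD // addrACA.
- by move=> c phi tphi; rewrite /dadd TZ ?UZ // mulrDr.
move=> K; have [c1 [m1 Tc]] := Tb K; have [c2 [m2 Uc]] := Ub K.
exists (c1 + c2), (maxn m1 m2) => phi tphi phiK B phiB.
apply: le_trans (cabsD _ _) _; rewrite mulrDl; apply: lerD.
- by apply: Tc => // l lm; apply: phiB; rewrite leq_max lm.
- by apply: Uc => // l lm; apply: phiB; rewrite leq_max lm orbT.
Qed.

Lemma distrZ S c (T : distrfun R N S) : is_distr T -> is_distr (dscale c T).
Proof.
move=> [TD TZ Tb]; split.
- by move=> phi psi tphi tpsi; rewrite /dscale TD // mulrDr.
- by move=> c' phi tphi; rewrite /dscale TZ // mulrCA.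
move=> K; have [c1 [m1 Tc]] := Tb K.
exists (cabs c * c1), m1 => phi tphi phiK B phiB.
by rewrite /dscale cabsM -mulrA ler_wpM2l ?cabs_ge0 ?Tc.
Qed.

Lemma distr_sum S (I : Type) (r : seq I) (F : I -> distrfun R N S) :
  (forall j, is_distr (F j)) -> is_distr (fun phi => \sum_(j <- r) F j phi).
Proof.
move=> dF; elim: r => [|j r IH].
  by apply: distr_eq_on_tests (@distr0 S) => phi _; rewrite big_nil.
by apply: distr_eq_on_tests (distrD (dF j) IH) => phi _; rewrite big_cons.
Qed.

Lemma distr_dderiv S s i (T : distrfun R N S) : is_distr T -> is_distr (dderiv s i T).
Proof.
move=> [TD TZ Tb]; split.
- move=> phi psi tphi tpsi.
  rewrite /dderiv (pdD s i (smooth_has_partials tphi.1) (smooth_has_partials tpsi.1)).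
  by rewrite TD ?opprD //; apply: test_pd.
- move=> c phi tphi; rewrite /dderiv pdZ; last exact: smooth_has_partials tphi.1.
  by rewrite TZ ?mulrN //; apply: test_pd.
move=> K; have [c1 [m1 Tc]] := Tb K.
exists c1, m1.+1 => phi tphi phiK B phiB.
rewrite /dderiv cabsN; apply: Tc; [exact: test_pd | exact: supported_pd |].
by move=> l lm x; rewrite -(pds_rcons l (s, i)); apply: phiB; rewrite size_rcons.
Qed.

Lemma distr_ddiag S i (T : distrfun R N S) : is_distr T -> is_distr (ddiag i T).
Proof. by move=> dT; apply: distr_sum => s; apply: distr_dderiv. Qed.

Lemma test_coordM S s i (phi : cfun R N S) :
  is_test phi -> is_test (fun x => coord s i x * phi x).
Proof. exact/testM/smooth_coord. Qed.

Lemma pd_coordM S (s0 : S) i0 s i (phi : cfun R N S) : smooth phi ->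
  pd (fun x => coord s0 i0 x * phi x) s i =
  (fun x => (if (s0 == s) && (i0 == i) then 1 else 0) * phi x +
            coord s0 i0 x * pd phi s i x).
Proof.
move=> sphi.
by rewrite (pdM s i (has_partials_coord s0 i0) (smooth_has_partials sphi)) pd_coord.
Qed.

(* On the support [|y| <= K] of [phi], the coordinate is bounded by [|K|], and each
   derivative falling on it produces one more copy of a derivative of [phi]. *)
Lemma pds_coordM_bound S (s0 : S) (i0 : 'I_N) (K B : R) l (phi : cfun R N S) :
  is_test phi -> supported_in phi K ->
  (forall l', (size l' <= size l)%N -> forall y, cabs (pds l' phi y) <= B) ->
  forall y, cabs (pds l (fun x => coord s0 i0 x * phi x) y) <= (`|K| + (size l)%:R) * B.
Proof.
elim/last_ind: l phi => [|l t IH] phi tphi phiK phiB y.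
  have B0 : 0 <= B := le_trans (cabs_ge0 _) (phiB [::] isT y).
  rewrite /= addr0 cabsM /coord cabs_real.
  have [[s [i Ky]]|Ky] := pselect (exists s i, K < `|y s i|).
    by rewrite (phiK y (ex_intro _ s (ex_intro _ i Ky))) cabs0 mulr0 mulr_ge0.
  have yK : `|y s0 i0| <= `|K|.
    rewrite leNgt; apply/negP => Ky0; apply: Ky; exists s0, i0.
    exact: le_lt_trans (ler_norm K) Ky0.
  by apply: ler_pM => //; [exact: cabs_ge0 | exact: (phiB [::])].
have sphi : smooth phi := tphi.1.
rewrite pds_rcons pd_coordM // pdsD; first last.
- by apply: smoothM; [apply: smooth_coord | apply: smooth_pd].
- exact/smoothM/sphi/smooth_cst.
rewrite pdsZ // size_rcons -addn1 natrD addrA mulrDl mul1r [X in _ <= X]addrC.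
apply: le_trans (cabsD _ _) _; apply: lerD.
  rewrite cabsM -[X in _ <= X]mul1r; apply: ler_pM; rewrite ?cabs_ge0 //.
    by case: ifP; rewrite ?cabs1 ?cabs0 ?ler01.
  by apply: phiB; rewrite size_rcons leqW.
apply: IH; [exact: test_pd | exact: supported_pd |].
by move=> l' l'l y'; rewrite -pds_rcons; apply: phiB; rewrite !size_rcons ltnS.
Qed.

Lemma distr_coordM S s i (T : distrfun R N S) : is_distr T -> is_distr (dmul (coord s i) T).
Proof.
move=> [TD TZ Tb]; split.
- move=> phi psi tphi tpsi; rewrite /dmul -TD; try exact: test_coordM.
  by congr T; apply/funext => x; rewrite mulrDr.
- move=> c phi tphi; rewrite /dmul -TZ; last exact: test_coordM.
  by congr T; apply/funext => x; rewrite mulrCA.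
move=> K; have [c1 [m1 Tc]] := Tb K.
exists (c1 * (`|K| + m1%:R)), m1 => phi tphi phiK B phiB.
rewrite /dmul -mulrA; apply: Tc; first exact: test_coordM.
  by move=> x /phiK ->; rewrite mulr0.
move=> l lm x; apply: le_trans (pds_coordM_bound _ _ tphi phiK _ _) _.
  by move=> l' l'l; apply: phiB; apply: leq_trans lm.
apply: ler_wpM2r; first exact: le_trans (cabs_ge0 _) (phiB [::] isT x).
by rewrite lerD2l ler_nat.
Qed.

End DistributionOperations.

Section QuasiPolynomial.
Context (R : realType) (N : nat).
Implicit Types (S : finType).

Local Notation ddiags := (foldr (@ddiag R N _)).

Definition ddiag_nilpotent S M (T : distrfun R N S) :=
  forall l : seq 'I_N, (M <= size l)%N -> forall phi, is_test phi -> ddiags T l phi = 0.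

Lemma ddiag_eq_on_tests S j (T U : distrfun R N S) :
  eq_on_tests T U -> eq_on_tests (ddiag j T) (ddiag j U).
Proof.
by move=> TU phi tphi; apply: eq_bigr => s _; rewrite /dderiv TU //; apply: test_pd.
Qed.

Lemma ddiags_eq_on_tests S l (T U : distrfun R N S) :
  eq_on_tests T U -> eq_on_tests (ddiags T l) (ddiags U l).
Proof. by move=> TU; elim: l => [|j l IH] //=; apply: ddiag_eq_on_tests. Qed.

Lemma ddiagsD S l (T U : distrfun R N S) :
  ddiags (dadd T U) l = dadd (ddiags T l) (ddiags U l).
Proof.
elim: l => [|j l IH] //=; rewrite IH; apply/funext => phi.
by rewrite /ddiag /dderiv /dadd -big_split; apply: eq_bigr => s _; rewrite opprD.
Qed.

Lemma ddiagsZ S l c (T : distrfun R N S) : ddiags (dscale c T) l = dscale c (ddiags T l).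
Proof.
elim: l => [|j l IH] //=; rewrite IH; apply/funext => phi.
by rewrite /ddiag /dderiv /dscale mulr_sumr; apply: eq_bigr => s _; rewrite mulrN.
Qed.

Lemma ddiags0 S l : ddiags (@dzero R N S) l = @dzero R N S.
Proof.
elim: l => [|j l IH] //=; rewrite IH; apply/funext => phi.
by rewrite /ddiag /dderiv /dzero big1 // => s _; rewrite oppr0.
Qed.

Lemma ddiags_rcons S l j (T : distrfun R N S) : ddiags T (rcons l j) = ddiags (ddiag j T) l.
Proof. by rewrite -cats1 foldr_cat. Qed.

Lemma quasipolyE S (T : distrfun R N S) :
  quasipoly T <-> is_distr T /\ exists M, ddiag_nilpotent M T.
Proof.
split=> -[dT [M TM]]; split=> //; exists M; last by move=> l lM; apply: TM; rewrite lM.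
move=> l lM phi tphi; rewrite -(cat_take_drop (size l - M) l) foldr_cat.
have TM0 : eq_on_tests (ddiags T (drop (size l - M) l)) (@dzero R N S).
  by move=> psi tpsi; apply: TM; rewrite // size_drop subKn.
by rewrite (ddiags_eq_on_tests _ TM0) // ddiags0.
Qed.

Lemma ddiag_nilpotent_eq_on_tests S M (T U : distrfun R N S) :
  eq_on_tests T U -> ddiag_nilpotent M T -> ddiag_nilpotent M U.
Proof. by move=> TU TM l lM phi tphi; rewrite -(ddiags_eq_on_tests l TU) // TM. Qed.

Lemma ddiag_nilpotentD S M M' (T U : distrfun R N S) :
  ddiag_nilpotent M T -> ddiag_nilpotent M' U -> ddiag_nilpotent (maxn M M') (dadd T U).
Proof.
move=> TM UM l; rewrite geq_max => /andP[lM lM'] phi tphi.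
by rewrite ddiagsD /dadd TM ?UM ?addr0.
Qed.

Lemma ddiag_nilpotentZ S M c (T : distrfun R N S) :
  ddiag_nilpotent M T -> ddiag_nilpotent M (dscale c T).
Proof. by move=> TM l lM phi tphi; rewrite ddiagsZ /dscale TM ?mulr0. Qed.

Lemma ddiag_coordM S (s0 : S) i0 j (T : distrfun R N S) phi : is_distr T -> is_test phi ->
  ddiag j (dmul (coord s0 i0) T) phi =
  dmul (coord s0 i0) (ddiag j T) phi + (if i0 == j then T phi else 0).
Proof.
move=> dT tphi.
have Tpd s : T (pd (fun y => coord s0 i0 y * phi y) s j) =
    (if (s0 == s) && (i0 == j) then 1 else 0) * T phi +
    T (fun y => coord s0 i0 y * pd phi s j y).
  rewrite pd_coordM; last exact: tphi.1.
  by rewrite distr_linD ?distr_linZ //; [apply: testZ | apply/test_coordM/test_pd].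
have -> : (if i0 == j then T phi else 0) =
    \sum_(s : S) (if (s0 == s) && (i0 == j) then 1 else 0) * T phi.
  rewrite (bigD1 s0) //= eqxx big1 ?addr0 => [|s /negbTE s0s]; last by rewrite eq_sym s0s mul0r.
  by case: (i0 == j); rewrite ?mul1r ?mul0r.
rewrite /ddiag /dmul /dderiv -big_split; apply: eq_bigr => s _ /=.
by rewrite Tpd opprD addrAC addNr add0r.
Qed.

Lemma ddiag_nilpotent_coordM S (s0 : S) i0 M (T : distrfun R N S) :
  is_distr T -> ddiag_nilpotent M T -> ddiag_nilpotent M.+1 (dmul (coord s0 i0) T).
Proof.
elim: M T => [|M IH] T dT TM l.
  move=> _ phi tphi; have T0 : eq_on_tests (dmul (coord s0 i0) T) (@dzero R N S).
    by move=> psi tpsi; apply: (TM [::]) => //; apply: test_coordM.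
  by rewrite (ddiags_eq_on_tests l T0) // ddiags0.
case/lastP: l => [//|l j]; rewrite size_rcons ltnS => lM phi tphi.
rewrite ddiags_rcons.
pose G := if i0 == j then T else @dzero R N S.
have E : eq_on_tests (ddiag j (dmul (coord s0 i0) T)) (dadd (dmul (coord s0 i0) (ddiag j T)) G).
  by move=> psi tpsi; rewrite ddiag_coordM // /dadd /G; case: (i0 == j).
rewrite (ddiags_eq_on_tests l E) // ddiagsD /dadd.
rewrite (IH (ddiag j T)) ?add0r //; first last.
- by move=> l' l'M psi tpsi; rewrite -ddiags_rcons TM // size_rcons.
- exact: distr_ddiag.
by rewrite /G; case: (i0 == j); [apply: TM; rewrite // ltnW | rewrite ddiags0].
Qed.

Lemma ddiag_dderiv S s i j (T : distrfun R N S) :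
  eq_on_tests (ddiag j (dderiv s i T)) (dderiv s i (ddiag j T)).
Proof.
move=> phi tphi; rewrite /ddiag /dderiv -sumrN; apply: eq_bigr => t _.
by rewrite (pd_comm t j s i tphi.1).
Qed.

Lemma ddiags_dderiv S s i l (T : distrfun R N S) :
  eq_on_tests (ddiags (dderiv s i T) l) (dderiv s i (ddiags T l)).
Proof.
elim: l => [|j l IH] //=.
exact: eq_on_tests_trans (ddiag_eq_on_tests j IH) (ddiag_dderiv s i j _).
Qed.

Lemma quasipoly_eq_on_tests S (T U : distrfun R N S) :
  eq_on_tests T U -> quasipoly T -> quasipoly U.
Proof.
move=> TU /quasipolyE[dT [M TM]]; apply/quasipolyE; split.
  exact: distr_eq_on_tests dT.
by exists M; apply: ddiag_nilpotent_eq_on_tests TM.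
Qed.

Lemma quasipoly0 S : quasipoly (@dzero R N S).
Proof.
apply/quasipolyE; split; first exact: distr0.
by exists 0%N => l _ phi _; rewrite ddiags0.
Qed.

Lemma quasipolyD S (T U : distrfun R N S) : quasipoly T -> quasipoly U -> quasipoly (dadd T U).
Proof.
move=> /quasipolyE[dT [M TM]] /quasipolyE[dU [M' UM]]; apply/quasipolyE.
by split; [apply: distrD | exists (maxn M M'); apply: ddiag_nilpotentD].
Qed.

Lemma quasipolyZ S c (T : distrfun R N S) : quasipoly T -> quasipoly (dscale c T).
Proof.
move=> /quasipolyE[dT [M TM]]; apply/quasipolyE.
by split; [apply: distrZ | exists M; apply: ddiag_nilpotentZ].
Qed.

Lemma quasipoly_coordM S s i (T : distrfun R N S) :
  quasipoly T -> quasipoly (dmul (coord s i) T).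
Proof.
move=> /quasipolyE[dT [M TM]]; apply/quasipolyE.
by split; [apply: distr_coordM | exists M.+1; apply: ddiag_nilpotent_coordM].
Qed.

Lemma quasipoly_dderiv S s i (T : distrfun R N S) : quasipoly T -> quasipoly (dderiv s i T).
Proof.
move=> /quasipolyE[dT [M TM]]; apply/quasipolyE; split; first exact: distr_dderiv.
exists M => l lM phi tphi; rewrite ddiags_dderiv // /dderiv TM ?oppr0 //.
exact: test_pd.
Qed.

End QuasiPolynomial.

Section Projections.
Context (R : realType) (N : nat).
Implicit Types (S : finType).

(* Modelled on the restrictions Y^S -> Y^S1, Y^S -> Y^S2 to the blocks of a partition. *)
Definition coord_projection S S' (r : pt R N S -> pt R N S') :=
  (forall x y, supdist (r x) (r y) <= supdist x y) /\
  forall s i, (exists s', forall x h, r (upd x s i h) = upd (r x) s' i h) \/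
              (forall x h, r (upd x s i h) = r x).

Lemma pd_comp_line S S' (r : pt R N S -> pt R N S') (phi : cfun R N S') s i s' x :
  (forall x h, r (upd x s i h) = upd (r x) s' i h) ->
  (has_pd phi s' i (r x) -> has_pd (fun y => phi (r y)) s i x) /\
  pd (fun y => phi (r y)) s i x = pd phi s' i (r x).
Proof.
move=> rline; rewrite !has_pdE !pdE.
have -> : line_Re (fun y => phi (r y)) x s i = line_Re phi (r x) s' i.
  by apply/funext => h; rewrite /line_Re rline.
have -> : line_Im (fun y => phi (r y)) x s i = line_Im phi (r x) s' i.
  by apply/funext => h; rewrite /line_Im rline.
by [].
Qed.

Lemma pd_comp_point S S' (r : pt R N S -> pt R N S') (phi : cfun R N S') s i x :
  (forall x h, r (upd x s i h) = r x) ->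
  has_pd (fun y => phi (r y)) s i x /\ pd (fun y => phi (r y)) s i x = 0.
Proof.
move=> rpt; rewrite has_pdE pdE.
have -> : line_Re (fun y => phi (r y)) x s i = cst (complex.Re (phi (r x))).
  by apply/funext => h; rewrite /line_Re rpt.
have -> : line_Im (fun y => phi (r y)) x s i = cst (complex.Im (phi (r x))).
  by apply/funext => h; rewrite /line_Im rpt.
by split; [split; apply: derivable_cst | rewrite !derive_cst].
Qed.

Lemma smooth_comp_projection S S' (r : pt R N S -> pt R N S') (phi : cfun R N S') :
  coord_projection r -> smooth phi -> smooth (fun y => phi (r y)).
Proof.
move=> [r_lip rline] sphi.
apply: (smooth_pd_closed (Cl := fun F => exists2 g, smooth g & F = fun y => g (r y)));
  last by exists phi.
move=> _ [g sg ->]; split.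
- move=> x s i; case: (rline s i) => [[s' r_s]|r_s].
    exact: (pd_comp_line g x r_s).1 (smooth_has_partials sg (r x) s' i).
  exact: (pd_comp_point g x r_s).1.
- exact: ccontinuous_comp r_lip (smooth_ccontinuous sg).
move=> s i; case: (rline s i) => [[s' r_s]|r_s].
  exists (pd g s' i); first exact: smooth_pd.
  by apply/funext => x; exact: (pd_comp_line g x r_s).2.
exists (fun _ => 0); first exact: smooth_cst.
by apply/funext => x; exact: (pd_comp_point g x r_s).2.
Qed.

Section Blocks.
Context (S : finType) (P : {set S}).

Lemma restr1_upd_in s (sP : s \in P) i (x : pt R N S) h :
  restr1 (P := P) (upd x s i h) = upd (restr1 (P := P) x) (exist _ s sP) i h.
Proof. by apply/funext => s'; apply/funext => i'; rewrite /restr1 /upd -[s' == _]val_eqE. Qed.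

Lemma restr2_upd_in s (sP : s \notin P) i (x : pt R N S) h :
  restr2 (P := P) (upd x s i h) = upd (restr2 (P := P) x) (exist _ s sP) i h.
Proof. by apply/funext => s'; apply/funext => i'; rewrite /restr2 /upd -[s' == _]val_eqE. Qed.

Lemma restr1_upd_out s (sP : s \notin P) i (x : pt R N S) h :
  restr1 (P := P) (upd x s i h) = restr1 (P := P) x.
Proof.
apply/funext => -[s' s'P]; apply/funext => i'; rewrite /restr1 /upd /=.
by case: eqP => // s's; move: sP; rewrite -s's s'P.
Qed.

Lemma restr2_upd_out s (sP : s \in P) i (x : pt R N S) h :
  restr2 (P := P) (upd x s i h) = restr2 (P := P) x.
Proof.
apply/funext => -[s' s'P]; apply/funext => i'; rewrite /restr2 /upd /=.
by case: eqP => // s's; move: s'P; rewrite s's sP.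
Qed.

Lemma coord_projection_restr1 : coord_projection (restr1 (P := P) : pt R N S -> _).
Proof.
split=> [x y|s i].
  by apply: supdist_le => [|s i]; [exact: supdist_ge0 | exact: coord_le_supdist x y (val s) i].
case: (boolP (s \in P)) => sP; first by left; exists (exist _ s sP) => x h; apply: restr1_upd_in.
by right => x h; apply: restr1_upd_out.
Qed.

Lemma coord_projection_restr2 : coord_projection (restr2 (P := P) : pt R N S -> _).
Proof.
split=> [x y|s i].
  by apply: supdist_le => [|s i]; [exact: supdist_ge0 | exact: coord_le_supdist x y (val s) i].
case: (boolP (s \in P)) => sP; last by left; exists (exist _ s sP) => x h; apply: restr2_upd_in.
by right => x h; apply: restr2_upd_out.
Qed.

Definition tensor (phi : cfun R N (sub1 P)) (psi : cfun R N (sub2 P)) : cfun R N S :=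
  fun x => phi (restr1 x) * psi (restr2 x).

Lemma test_tensor phi psi : is_test phi -> is_test psi -> is_test (tensor phi psi).
Proof.
move=> [sphi [K1 phiK1]] [spsi [K2 psiK2]]; split.
  apply: smoothM; first exact: smooth_comp_projection coord_projection_restr1 sphi.
  exact: smooth_comp_projection coord_projection_restr2 spsi.
exists (Num.max K1 K2) => x [s [i Kx]]; rewrite /tensor.
have KK1 : K1 <= Num.max K1 K2 by rewrite le_max lexx.
have KK2 : K2 <= Num.max K1 K2 by rewrite le_max lexx orbT.
case: (boolP (s \in P)) => sP.
  by rewrite phiK1 ?mul0r //; exists (exist _ s sP), i; apply: le_lt_trans KK1 Kx.
by rewrite psiK2 ?mulr0 //; exists (exist _ s sP), i; apply: le_lt_trans KK2 Kx.
Qed.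

Lemma pd_tensor1 s (sP : s \in P) i phi psi : smooth phi -> smooth psi ->
  pd (tensor phi psi) s i = tensor (pd phi (exist _ s sP) i) psi.
Proof.
move=> sphi spsi; have [p1 p2] := (coord_projection_restr1, coord_projection_restr2).
rewrite /tensor (pdM s i (smooth_has_partials (smooth_comp_projection p1 sphi))
  (smooth_has_partials (smooth_comp_projection p2 spsi))).
apply/funext => x; rewrite (pd_comp_line phi x (restr1_upd_in sP i)).2.
by rewrite (pd_comp_point psi x (restr2_upd_out sP i)).2 mulr0 addr0.
Qed.

Lemma pd_tensor2 s (sP : s \notin P) i phi psi : smooth phi -> smooth psi ->
  pd (tensor phi psi) s i = tensor phi (pd psi (exist _ s sP) i).
Proof.
move=> sphi spsi; have [p1 p2] := (coord_projection_restr1, coord_projection_restr2).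
rewrite /tensor (pdM s i (smooth_has_partials (smooth_comp_projection p1 sphi))
  (smooth_has_partials (smooth_comp_projection p2 spsi))).
apply/funext => x; rewrite (pd_comp_line psi x (restr2_upd_in sP i)).2.
by rewrite (pd_comp_point phi x (restr1_upd_out sP i)).2 mul0r add0r.
Qed.

End Blocks.
End Projections.

Section Polynomials.
Context (R : realType) (N : nat).
Implicit Types (S : finType).

Lemma poly_smooth S (p : cfun R N S) : is_poly p -> smooth p.
Proof.
elim=> [c|s i|p1 p2 _ sp1 _ sp2|p1 p2 _ sp1 _ sp2].
- exact: smooth_cst.
- exact: smooth_coord.
- exact: smoothD.
- exact: smoothM.
Qed.

Lemma poly_pd S (p : cfun R N S) s i : is_poly p -> is_poly (pd p s i).
Proof.
elim=> [c|t j|p1 p2 P1 pd1 P2 pd2|p1 p2 P1 pd1 P2 pd2].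
- by rewrite pd_cst; apply: poly_const.
- by rewrite pd_coord; apply: poly_const.
- by rewrite (pdD s i (smooth_has_partials (poly_smooth P1))
    (smooth_has_partials (poly_smooth P2))); apply: poly_add.
- rewrite (pdM s i (smooth_has_partials (poly_smooth P1))
    (smooth_has_partials (poly_smooth P2))).
  by apply: poly_add; apply: poly_mul.
Qed.

Lemma polyB S (p q : cfun R N S) : is_poly p -> is_poly q -> is_poly (fun x => p x - q x).
Proof.
move=> pp pq; under eq_fun do rewrite -mulN1r.
by apply: poly_add => //; apply: poly_mul => //; apply: poly_const.
Qed.

Lemma polyX S (p : cfun R N S) n : is_poly p -> is_poly (fun x => p x ^+ n).
Proof.
move=> pp; elim: n => [|n IH]; first by under eq_fun do rewrite expr0; apply: poly_const.
by under eq_fun do rewrite exprS; apply: poly_mul.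
Qed.

Lemma poly_sum S (I : Type) (r : seq I) (F : I -> cfun R N S) :
  (forall j, is_poly (F j)) -> is_poly (fun x => \sum_(j <- r) F j x).
Proof.
move=> pF; elim: r => [|a r IH]; first by under eq_fun do rewrite big_nil; apply: poly_const.
by under eq_fun do rewrite big_cons; apply: poly_add.
Qed.

Lemma poly_prod S (I : Type) (r : seq I) (F : I -> cfun R N S) :
  (forall j, is_poly (F j)) -> is_poly (fun x => \prod_(j <- r) F j x).
Proof.
move=> pF; elim: r => [|a r IH]; first by under eq_fun do rewrite big_nil; apply: poly_const.
by under eq_fun do rewrite big_cons; apply: poly_mul.
Qed.

Lemma poly_Qprod S (P : {set S}) : is_poly (Qprod (R := R) (N := N) P).
Proof.
apply: poly_prod => s1; apply: poly_prod => s2; rewrite /qst.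
under eq_fun do rewrite rmorph_sum; apply: poly_sum => i.
under eq_fun do rewrite rmorphXn rmorphB.
by apply/polyX/polyB; apply: poly_coord.
Qed.

End Polynomials.

Section WeylStable.
Context (R : realType) (N : nat).
Implicit Types (S : finType).

(* Named after the Weyl algebra of polynomial differential operators, generated by
   the coordinate multiplications and the partial derivatives. *)
Record weyl_stable S (Cl : distrfun R N S -> Prop) : Prop := WeylStable {
  weyl_distr : forall T, Cl T -> is_distr T;
  weyl_eq_on_tests : forall T U, eq_on_tests T U -> Cl T -> Cl U;
  weyl0 : Cl (@dzero R N S);
  weylD : forall T U, Cl T -> Cl U -> Cl (dadd T U);
  weylZ : forall c T, Cl T -> Cl (dscale c T);
  weyl_coordM : forall s i T, Cl T -> Cl (dmul (coord s i) T);
  weyl_dderiv : forall s i T, Cl T -> Cl (dderiv s i T) }.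

Lemma weyl_stable_distr S : weyl_stable (@is_distr R N S).
Proof.
split=> //; [exact: distr_eq_on_tests | exact: distr0 | exact: distrD | exact: distrZ |
  exact: distr_coordM | exact: distr_dderiv].
Qed.

Lemma weyl_stable_quasipoly S : weyl_stable (@quasipoly R N S).
Proof.
split; [by move=> T [] | exact: quasipoly_eq_on_tests | exact: quasipoly0 |
  exact: quasipolyD | exact: quasipolyZ | exact: quasipoly_coordM | exact: quasipoly_dderiv].
Qed.

Lemma weyl_stable_ext S (Cl Cl' : distrfun R N S -> Prop) :
  (forall T, Cl T <-> Cl' T) -> weyl_stable Cl -> weyl_stable Cl'.
Proof.
move=> ClE [Cd Ce C0 CD CZ Cx Cp]; split.
- by move=> T /ClE/Cd.
- by move=> T U TU /ClE/(Ce _ _ TU)/ClE.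
- exact/ClE.
- by move=> T U /ClE CT /ClE CU; apply/ClE/CD.
- by move=> c T /ClE CT; apply/ClE/CZ.
- by move=> s i T /ClE CT; apply/ClE/Cx.
- by move=> s i T /ClE CT; apply/ClE/Cp.
Qed.

Lemma weyl_stable_and S (Cl1 Cl2 : distrfun R N S -> Prop) :
  weyl_stable Cl1 -> weyl_stable (fun T => is_distr T /\ Cl2 T) ->
  weyl_stable (fun T => Cl1 T /\ Cl2 T).
Proof.
move=> w1 w2; have d1 := weyl_distr w1.
split=> [T [/d1]|T U TU [/[dup]/d1 dT c1 c2]|
  |T U [/[dup]/d1 dT c1 c2] [/[dup]/d1 dU c1' c2']|c T [/[dup]/d1 dT c1 c2]
  |s i T [/[dup]/d1 dT c1 c2]|s i T [/[dup]/d1 dT c1 c2]] //; split.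
- exact: weyl_eq_on_tests w1 _ _ TU c1.
- exact: (weyl_eq_on_tests w2 TU (conj dT c2)).2.
- exact: weyl0 w1.
- exact: (weyl0 w2).2.
- exact: weylD.
- exact: (weylD w2 (conj dT c2) (conj dU c2')).2.
- exact: weylZ.
- exact: (weylZ w2 c (conj dT c2)).2.
- exact: weyl_coordM.
- exact: (weyl_coordM w2 s i (conj dT c2)).2.
- exact: weyl_dderiv.
- exact: (weyl_dderiv w2 s i (conj dT c2)).2.
Qed.

Lemma weyl_stable_forall S (I : Type) (Cl : I -> distrfun R N S -> Prop) :
  (forall j, weyl_stable (fun T => is_distr T /\ Cl j T)) ->
  weyl_stable (fun T => is_distr T /\ forall j, Cl j T).
Proof.
move=> w; split.
- by move=> T [].
- move=> T U TU [dT cT]; split; first exact: distr_eq_on_tests TU dT.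
  by move=> j; exact: (weyl_eq_on_tests (w j) TU (conj dT (cT j))).2.
- by split=> [|j]; [exact: distr0 | exact: (weyl0 (w j)).2].
- move=> T U [dT cT] [dU cU]; split=> [|j]; first exact: distrD.
  exact: (weylD (w j) (conj dT (cT j)) (conj dU (cU j))).2.
- move=> c T [dT cT]; split=> [|j]; first exact: distrZ.
  exact: (weylZ (w j) c (conj dT (cT j))).2.
- move=> s i T [dT cT]; split=> [|j]; first exact: distr_coordM.
  exact: (weyl_coordM (w j) s i (conj dT (cT j))).2.
- move=> s i T [dT cT]; split=> [|j]; first exact: distr_dderiv.
  exact: (weyl_dderiv (w j) s i (conj dT (cT j))).2.
Qed.

Lemma dmul_eq_on_tests S (p : cfun R N S) (T U : distrfun R N S) :
  smooth p -> eq_on_tests T U -> eq_on_tests (dmul p T) (dmul p U).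
Proof. by move=> sp TU phi tphi; rewrite /dmul TU //; apply: testM. Qed.

Lemma weyl_polyM S (Cl : distrfun R N S -> Prop) p T :
  weyl_stable Cl -> is_poly p -> Cl T -> Cl (dmul p T).
Proof.
move=> w pp; elim: pp T => [c|s i|p1 q P1 IH1 P2 IH2|p1 q P1 IH1 P2 IH2] T CT;
  have dT := weyl_distr w CT.
- apply: (weyl_eq_on_tests w _ (weylZ w c CT)) => phi tphi.
  by rewrite /dmul /dscale distr_linZ.
- exact: weyl_coordM.
- apply: (weyl_eq_on_tests w _ (weylD w (IH1 _ CT) (IH2 _ CT))) => phi tphi.
  rewrite /dmul /dadd -distr_linD //;
    [|exact: testM (poly_smooth P1) tphi | exact: testM (poly_smooth P2) tphi].
  by congr T; apply/funext => x; rewrite mulrDl.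
- apply: (weyl_eq_on_tests w _ (IH1 _ (IH2 _ CT))) => phi tphi.
  by rewrite /dmul; congr T; apply/funext => x; rewrite mulrCA mulrA.
Qed.

Lemma weyl_sum S (Cl : distrfun R N S -> Prop) (I : Type) (r : seq I) (F : I -> distrfun R N S) :
  weyl_stable Cl -> (forall j, Cl (F j)) -> Cl (fun phi => \sum_(j <- r) F j phi).
Proof.
move=> w CF; elim: r => [|a r IH].
  by apply: (weyl_eq_on_tests w _ (weyl0 w)) => phi _; rewrite big_nil.
by apply: (weyl_eq_on_tests w _ (weylD w (CF a) IH)) => phi _; rewrite big_cons.
Qed.

Lemma weyl_dderivs S (Cl : distrfun R N S -> Prop) l T :
  weyl_stable Cl -> Cl T -> Cl (dderivs l T).
Proof. by move=> w CT; elim: l => [|t l IH] //=; apply: weyl_dderiv. Qed.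

End WeylStable.

Section Leibniz.
Context (R : realType) (N : nat).
Implicit Types (S : finType).

(* [q^(M+1) dT = d(q (q^M T)) - (M+1) (dq) (q^M T)]: after multiplication by
   one more power of [q], a derivative of [T] is expressed through [q^M T]. *)
Lemma dmul_powS_dderiv S s i (q : cfun R N S) M (T : distrfun R N S) :
  smooth q -> is_distr T ->
  eq_on_tests (dadd (dderiv s i (dmul q (dmul (fun x => q x ^+ M) T)))
                    (dscale (- (M.+1)%:R) (dmul (pd q s i) (dmul (fun x => q x ^+ M) T))))
              (dmul (fun x => q x ^+ M.+1) (dderiv s i T)).
Proof.
move=> sq dT phi tphi; have sphi : smooth phi := tphi.1.
rewrite /dadd /dscale /dderiv /dmul.
rewrite (pdM s i (smooth_has_partials (smoothX M.+1 sq)) (smooth_has_partials sphi)).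
rewrite pdX // distr_linD //; first last.
- exact: testM (smoothX _ sq) (test_pd _ _ tphi).
- apply: testM tphi; apply: smoothM (smooth_pd _ _ sq).
  exact: smoothM (smooth_cst _) (smoothX _ sq).
have -> : (fun x => M.+1%:R * q x ^+ M * pd q s i x * phi x) =
          (fun x => M.+1%:R * (q x ^+ M * (pd q s i x * phi x))).
  by apply/funext => x; rewrite !mulrA.
have -> : (fun x => q x ^+ M.+1 * pd phi s i x) = (fun x => q x ^+ M * (q x * pd phi s i x)).
  by apply/funext => x; rewrite exprSr mulrA.
rewrite distr_linZ //; last exact: testM (smoothX M sq) (testM (smooth_pd s i sq) tphi).
by rewrite mulNr opprD addrC.
Qed.

End Leibniz.

Section TensorSpaces.
Context (R : realType) (N : nat) (S : finType) (P : {set S}).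
Context (A : distrfun R N (sub1 P) -> Prop) (B : distrfun R N (sub2 P) -> Prop).
Hypotheses (wA : weyl_stable A) (wB : weyl_stable B).

Local Notation inT := (@in_T R N S P A B).

Lemma in_T_eq_on_tests (T U : distrfun R N S) : eq_on_tests T U -> inT T -> inT U.
Proof.
move=> TU [k [a [b [Aa Bb Tab]]]]; exists k, a, b; split => // phi psi tphi tpsi.
by rewrite -Tab // TU //; apply: test_tensor.
Qed.

Lemma in_T0 : inT (@dzero R N S).
Proof.
exists 0%N, (fun _ => @dzero R N (sub1 P)), (fun _ => @dzero R N (sub2 P)).
by split=> [j|j|phi psi _ _]; [exact: weyl0 | exact: weyl0 | rewrite big_ord0].
Qed.

Lemma in_TD (T U : distrfun R N S) : inT T -> inT U -> inT (dadd T U).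
Proof.
move=> [k1 [a1 [b1 [Aa1 Bb1 Tab]]]] [k2 [a2 [b2 [Aa2 Bb2 Uab]]]].
pose cat2 X (x1 : 'I_k1 -> X) (x2 : 'I_k2 -> X) (j : 'I_(k1 + k2)) :=
  match fintype.split j with inl j1 => x1 j1 | inr j2 => x2 j2 end.
exists (k1 + k2)%N, (cat2 _ a1 a2), (cat2 _ b1 b2); split.
- by move=> j; rewrite /cat2; case: (fintype.split j).
- by move=> j; rewrite /cat2; case: (fintype.split j).
move=> phi psi tphi tpsi; rewrite /dadd Tab // Uab // big_split_ord /cat2.
by congr (_ + _); apply: eq_bigr => j _; rewrite (unsplitK (inl _)) || rewrite (unsplitK (inr _)).
Qed.

Lemma in_TZ c (T : distrfun R N S) : inT T -> inT (dscale c T).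
Proof.
move=> [k [a [b [Aa Bb Tab]]]]; exists k, (fun j => dscale c (a j)), b.
split=> // [j|phi psi tphi tpsi]; first exact: weylZ.
by rewrite /dscale Tab // mulr_sumr; apply: eq_bigr => j _; rewrite mulrA.
Qed.

Lemma in_T_coordM s i (T : distrfun R N S) : inT T -> inT (dmul (coord s i) T).
Proof.
move=> [k [a [b [Aa Bb Tab]]]]; case: (boolP (s \in P)) => sP.
  exists k, (fun j => dmul (coord (exist _ s sP) i) (a j)), b.
  split=> // [j|phi psi tphi tpsi]; first exact: weyl_coordM.
  rewrite /dmul -(Tab (fun y => coord (exist _ s sP) i y * phi y)) //; last exact: test_coordM.
  by congr T; apply/funext => x; rewrite mulrA.
exists k, a, (fun j => dmul (coord (exist _ s sP) i) (b j)).
split=> // [j|phi psi tphi tpsi]; first exact: weyl_coordM.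
rewrite /dmul -(Tab phi (fun y => coord (exist _ s sP) i y * psi y)) //; last exact: test_coordM.
by congr T; apply/funext => x; rewrite mulrCA.
Qed.

Lemma in_T_dderiv s i (T : distrfun R N S) : inT T -> inT (dderiv s i T).
Proof.
move=> [k [a [b [Aa Bb Tab]]]]; case: (boolP (s \in P)) => sP.
  exists k, (fun j => dderiv (exist _ s sP) i (a j)), b.
  split=> // [j|phi psi tphi tpsi]; first exact: weyl_dderiv.
  have := pd_tensor1 sP i tphi.1 tpsi.1; rewrite /tensor /dderiv => ->.
  rewrite Tab //; last exact: test_pd.
  by rewrite -sumrN; apply: eq_bigr => j _; rewrite mulNr.
exists k, a, (fun j => dderiv (exist _ s sP) i (b j)).
split=> // [j|phi psi tphi tpsi]; first exact: weyl_dderiv.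
have := pd_tensor2 sP i tphi.1 tpsi.1; rewrite /tensor /dderiv => ->.
rewrite Tab //; last exact: test_pd.
by rewrite -sumrN; apply: eq_bigr => j _; rewrite mulrN.
Qed.

Lemma weyl_stable_in_T : weyl_stable (fun T => is_distr T /\ inT T).
Proof.
split.
- by move=> T [].
- by move=> T U TU [dT iT]; split; [exact: distr_eq_on_tests dT | exact: in_T_eq_on_tests iT].
- by split; [exact: distr0 | exact: in_T0].
- by move=> T U [dT iT] [dU iU]; split; [exact: distrD | exact: in_TD].
- by move=> c T [dT iT]; split; [exact: distrZ | exact: in_TZ].
- by move=> s i T [dT iT]; split; [exact: distr_coordM | exact: in_T_coordM].
- by move=> s i T [dT iT]; split; [exact: distr_dderiv | exact: in_T_dderiv].
Qed.

Lemma in_T_polyM p (T : distrfun R N S) : is_poly p -> is_distr T -> inT T -> inT (dmul p T).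
Proof. by move=> pp dT iT; have [] := weyl_polyM weyl_stable_in_T pp (conj dT iT). Qed.

Definition Qpow_in_T (T : distrfun R N S) :=
  exists M, inT (dmul (fun x => Qprod P x ^+ M) T).

Lemma weyl_stable_Qpow_in_T : weyl_stable (fun T => is_distr T /\ Qpow_in_T T).
Proof.
have pQ := @poly_Qprod R N S P.
have QM_distr (M : nat) (T : distrfun R N S) :
    is_distr T -> is_distr (dmul (fun x => Qprod P x ^+ M) T).
  by move=> dT; apply: weyl_polyM (weyl_stable_distr R N S) (polyX M pQ) dT.
split.
- by move=> T [].
- move=> T U TU [dT [M iT]]; split; first exact: distr_eq_on_tests dT.
  exists M; apply: in_T_eq_on_tests iT.
  exact: dmul_eq_on_tests (smoothX M (poly_smooth pQ)) TU.
- by split; [exact: distr0 | exists 0%N; exact: in_T0].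
- move=> T U [dT [M1 iT]] [dU [M2 iU]]; split; first exact: distrD.
  exists (M1 + M2)%N.
  have -> : dmul (fun x => Qprod P x ^+ (M1 + M2)) (dadd T U) =
      dadd (dmul (fun x => Qprod P x ^+ M2) (dmul (fun x => Qprod P x ^+ M1) T))
           (dmul (fun x => Qprod P x ^+ M1) (dmul (fun x => Qprod P x ^+ M2) U)).
    apply/funext => phi; rewrite /dmul /dadd.
    by congr (T _ + U _); apply/funext => x; rewrite exprD mulrA // [_ ^+ M2 * _]mulrC.
  by apply: in_TD; apply: in_T_polyM (polyX _ pQ) (QM_distr _ _ _) _.
- move=> c T [dT [M iT]]; split; first exact: distrZ.
  by exists M; apply: in_TZ.
- move=> s i T [dT [M iT]]; split; first exact: distr_coordM.
  exists M; have -> : dmul (fun x => Qprod P x ^+ M) (dmul (coord s i) T) =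
      dmul (coord s i) (dmul (fun x => Qprod P x ^+ M) T).
    by apply/funext => phi; rewrite /dmul; congr T; apply/funext => x; rewrite mulrCA.
  exact: in_T_coordM.
- move=> s i T [dT [M iT]]; split; first exact: distr_dderiv.
  exists M.+1; apply: in_T_eq_on_tests (dmul_powS_dderiv s i M (poly_smooth pQ) dT) _.
  apply: in_TD; first exact/in_T_dderiv/(in_T_polyM pQ (QM_distr _ _ dT)).
  exact/in_TZ/(in_T_polyM (poly_pd s i pQ) (QM_distr _ _ dT)).
Qed.

End TensorSpaces.

Lemma card_sub1_lt (S : finType) (P : {set S}) : P != setT -> (#|sub1 P| < #|S|)%N.
Proof.
move=> PT; rewrite card_sig (@eq_card _ _ P) // -cardsT.
by apply: proper_card; rewrite properT.
Qed.

Lemma card_sub2_lt (S : finType) (P : {set S}) : P != set0 -> (#|sub2 P| < #|S|)%N.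
Proof.
move=> P0; rewrite card_sig (@eq_card _ _ [predC P]) // -(cardC P).
by rewrite -{1}[#|[predC P]|]add0n ltn_add2r card_gt0.
Qed.

Lemma weyl_stable_Cfuel (R : realType) (N : nat) n (S : finType) :
  (#|S| <= n)%N -> weyl_stable (@Cfuel R N n S).
Proof.
elim: n S => [|n IH] S Sn.
  by apply: weyl_stable_ext (weyl_stable_quasipoly R N S) => T; split=> [|[]].
apply: weyl_stable_and (weyl_stable_quasipoly R N S) _.
apply: weyl_stable_forall => S_gt1; apply: weyl_stable_forall => P.
apply: weyl_stable_forall => P0; apply: weyl_stable_forall => PT.
apply: weyl_stable_Qpow_in_T; apply: IH; rewrite -ltnS; apply: leq_trans Sn.
- exact: card_sub1_lt.
- exact: card_sub2_lt.
Qed.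

Theorem mainTheorem1 (R : realType) (N : nat) (N_pos : (0 < N)%N) (N_even : ~~ odd N)
  (S : finType) (f : distrfun R N S) (hf : CS f)
  (k : nat) (p : 'I_k -> cfun R N S) (alpha : 'I_k -> seq (S * 'I_N))
  (hp : forall j, is_poly (p j)) :
  CS (apply_dop p alpha f).
Proof.
have wC := weyl_stable_Cfuel R N (leqnn #|S|).
rewrite /CS /apply_dop; apply: (weyl_sum _ wC) => j.
exact: weyl_polyM wC (hp j) (weyl_dderivs _ wC hf).
Qed.
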